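(* Given a Stackelberg game $(G,L,F)$, the problem f-SCE-PA of finding some SCE-PA $\mathbf{x}\in\mathbf{X}^{SCE\text{-}PA}$ can be solved with $|L|+1$ queries to a stability oracle $\mathcal{O}$ for $G$.
   Context: A finite game is $G=(N,\{S_p\}_{p\in N},\{u_p\}_{p\in N})$ with players $N=\{1,\dots,n\}$, finite nonempty strategy sets $S_p$, and utilities $u_p:S\to\mathbb{R}$ on $S=\prod_{p\in N}S_p$; write $s=(s_p,s_{-p})$ with $s_{-p}\in S_{-p}=\prod_{q\neq p}S_q$. $\mathcal{X}=\Delta(S)$ is the set of probability distributions on $S$ and $u_p(x)=\sum_{s\in S}x(s)u_p(s)$ for $x\in\mathcal{X}$. For $P\subseteq N$, $\mathcal{X}^{CE}_P$ is the set of $x\in\mathcal{X}$ such that for every $p\in P$ and all $s_p\neq s_p'\in S_p$: $\sum_{s_{-p}\in S_{-p}} x(s_p,s_{-p})\,(u_p(s_p,s_{-p})-u_p(s_p',s_{-p}))\ge 0$; $\mathcal{X}^{CE}=\mathcal{X}^{CE}_N$ is the set of correlated equilibria of $G$. A Stackelberg game (SG) is a triple $(G,L,F)$ with $L\cup F=N$ and $L\cap F=\emptyset$ (leaders and followers). For $P\subseteq N$, $\Pi_P$ is the set of ordered subsets of $P$ (finite sequences of pairwise distinct elements of $P$, including the empty sequence $\varnothing$); for $\pi\in\Pi_P$ and $p\in P$ not occurring in $\pi$, $\pi p$ is $\pi$ with $p$ appended; when used as a set, $\pi$ means its set of entries. $\mathbf{X}=\prod_{\pi\in\Pi_L}\mathcal{X}^{CE}_{\pi\cup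 F}$, with elements $\mathbf{x}=[x_\pi]_{\pi\in\Pi_L}$. For $\mathbf{x}\in\mathbf{X}$ and $\pi\in\Pi_L$, $x_\pi$ is stable if $u_p(x_\pi)\ge u_p(x_{\pi p})$ for all $p\in L\setminus\pi$; $\mathbf{x}$ is stable if $x_\varnothing$ is stable, and perfectly stable if $x_\pi$ is stable for every $\pi\in\Pi_L$; $\mathbf{X}^{S}$ and $\mathbf{X}^{PS}$ denote the sets of stable and perfectly stable elements of $\mathbf{X}$. For $\mathbf{X}'\subseteq\mathbf{X}$ and $\pi\in\Pi_L$, $\mathcal{P}_{L\setminus\pi}(\mathbf{X}')$ is the set of Pareto optimal elements of $\{x'_\pi:\mathbf{x}'\in\mathbf{X}'\}$ with respect to the objectives $u_p$, $p\in L\setminus\pi$ (an element $y$ of the set is Pareto optimal if no $y'$ in the set satisfies $u_p(y')\ge u_p(y)$ for all $p\in L\setminus\pi$ with strict inequality for some such $p$). $\mathbf{x}\in\mathbf{X}$ is an SCE-PA if $\mathbf{x}\in\mathbf{X}^{PS}$ and $x_\varnothing\in\mathcal{P}_L(\mathbf{X}^{PS})$; $\mathbf{X}^{SCE\text{-}PA}$ is the set of SCE-PAs. A stability oracle $\mathcal{O}(G,c,L^\ast,\{x_p\}_{p\in L'})$ is an algorithm that, given the game $G$, a coefficient vector $c=[c_p]\in[-1,1]^n$, a set $L^\ast\subseteq N$, and distributions $x_p\in\mathcal{X}$ for $p$ in some $L'\subseteq L^\ast$, returns some $x\in\mathcal{X}^{CE}_{N\setminus L^\ast}$ maximizing $\sum_{p\in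 N}\sum_{s\in S}c_pu_p(s)x(s)$ subject to the stability constraints $u_p(x)\ge u_p(x_p)$ for all $p\in L'$. *)

From HB Require Import structures.
From mathcomp Require Import all_boot all_order all_algebra.
Set Implicit Arguments. Unset Strict Implicit. Unset Printing Implicit Defensive.
Import Order.TTheory GRing.Theory Num.Theory.
Local Open Scope ring_scope.

Definition prof (n : nat) (S : 'I_n -> finType) := {dffun forall p : 'I_n, S p}.

Definition dev (n : nat) (S : 'I_n -> finType) (s : prof S) (p : 'I_n) (b : S p)
  : prof S := [ffun q => dfwith (fun k => s k) b q].

Definition dist (R : realFieldType) (n : nat) (S : 'I_n -> finType) := prof S -> R.

Definition isDist (R : realFieldType) (n : nat) (S : 'I_n -> finType)
  (x : dist R S) : Prop :=
  (forall s, 0 <= x s) /\ \sum_(s : prof S) x s = 1.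

Definition eu (R : realFieldType) (n : nat) (S : 'I_n -> finType)
  (u : 'I_n -> prof S -> R) (p : 'I_n) (x : dist R S) : R :=
  \sum_(s : prof S) x s * u p s.

Definition inCE (R : realFieldType) (n : nat) (S : 'I_n -> finType)
  (u : 'I_n -> prof S -> R) (P : {set 'I_n}) (x : dist R S) : Prop :=
  isDist x /\
  forall p, p \in P -> forall a b : S p, a != b ->
    0 <= \sum_(s : prof S | s p == a) x s * (u p s - u p (dev s b)).

Definition ordSub (n : nat) (L : {set 'I_n}) (pi : seq 'I_n) : Prop :=
  uniq pi /\ {subset pi <= L}.

(* elements of bold X: families indexed by ordered subsets of L
   (values at sequences that are not ordered subsets of L are irrelevant) *)
Definition family (R : realFieldType) (n : nat) (S : 'I_n -> finType) :=
  seq 'I_n -> dist R S.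

Definition inX (R : realFieldType) (n : nat) (S : 'I_n -> finType)
  (u : 'I_n -> prof S -> R) (L : {set 'I_n}) (X : family R S) : Prop :=
  forall pi, ordSub L pi -> inCE u ([set p in pi] :|: ~: L) (X pi).

Definition stableAt (R : realFieldType) (n : nat) (S : 'I_n -> finType)
  (u : 'I_n -> prof S -> R) (L : {set 'I_n}) (X : family R S) (pi : seq 'I_n)
  : Prop :=
  forall p, p \in L -> p \notin pi -> eu u p (X (rcons pi p)) <= eu u p (X pi).

Definition perfectlyStable (R : realFieldType) (n : nat) (S : 'I_n -> finType)
  (u : 'I_n -> prof S -> R) (L : {set 'I_n}) (X : family R S) : Prop :=
  inX u L X /\ forall pi, ordSub L pi -> stableAt u L X pi.

Definition SCE_PA (R : realFieldType) (n : nat) (S : 'I_n -> finType)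
  (u : 'I_n -> prof S -> R) (L : {set 'I_n}) (X : family R S) : Prop :=
  perfectlyStable u L X /\
  ~ (exists X' : family R S, perfectlyStable u L X' /\
       (forall p, p \in L -> eu u p (X [::]) <= eu u p (X' [::])) /\
       (exists p, p \in L /\ eu u p (X [::]) < eu u p (X' [::]))).

Definition oracleFeasible (R : realFieldType) (n : nat) (S : 'I_n -> finType)
  (u : 'I_n -> prof S -> R) (Ls Lp : {set 'I_n}) (xs : 'I_n -> dist R S)
  (x : dist R S) : Prop :=
  inCE u (~: Ls) x /\ forall p, p \in Lp -> eu u p (xs p) <= eu u p x.

Definition oracleObj (R : realFieldType) (n : nat) (S : 'I_n -> finType)
  (u : 'I_n -> prof S -> R) (c : 'I_n -> R) (x : dist R S) : R :=
  \sum_(p : 'I_n) \sum_(s : prof S) c p * u p s * x s.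

Definition oracle (R : realFieldType) (n : nat) (S : 'I_n -> finType) :=
  ('I_n -> R) -> {set 'I_n} -> {set 'I_n} -> ('I_n -> dist R S) -> dist R S.

Definition stabilityOracle (R : realFieldType) (n : nat) (S : 'I_n -> finType)
  (u : 'I_n -> prof S -> R) (O : oracle R S) : Prop :=
  forall (c : 'I_n -> R) (Ls Lp : {set 'I_n}) (xs : 'I_n -> dist R S),
    (forall p, -1 <= c p <= 1) -> Lp \subset Ls ->
    (forall p, p \in Lp -> isDist (xs p)) ->
    (exists x, oracleFeasible u Ls Lp xs x) ->
    oracleFeasible u Ls Lp xs (O c Ls Lp xs) /\
    forall y, oracleFeasible u Ls Lp xs y ->
      oracleObj u c y <= oracleObj u c (O c Ls Lp xs).

(* A query issued by the algorithm: coefficients c, sets L*, L', and for each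
   player p an index into the list of previous oracle answers, designating x_p. *)
Record query (R : realFieldType) (n : nat) := Query {
  q_c : 'I_n -> R;
  q_Ls : {set 'I_n};
  q_Lp : {set 'I_n};
  q_xs : 'I_n -> nat }.

(* An oracle algorithm: [alg_step a] is the next query, given the list [a] of
   previous answers; [alg_out a pi] is the index (into the final list of answers)
   of the answer output as the component x_pi. *)
Record oracleAlg (R : realFieldType) (n : nat) (S : 'I_n -> finType) := OracleAlg {
  alg_step : seq (dist R S) -> query R n;
  alg_out : seq (dist R S) -> seq 'I_n -> nat }.

Definition dist0 (R : realFieldType) (n : nat) (S : 'I_n -> finType) : dist R S :=
  fun _ => 0.

Definition ask (R : realFieldType) (n : nat) (S : 'I_n -> finType)
  (O : oracle R S) (a : seq (dist R S)) (q : query R n) : dist R S :=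
  O (q_c q) (q_Ls q) (q_Lp q) (fun p => nth (@dist0 R n S) a (q_xs q p)).

Fixpoint runAlg (R : realFieldType) (n : nat) (S : 'I_n -> finType)
  (A : oracleAlg R S) (O : oracle R S) (k : nat) : seq (dist R S) :=
  match k with
  | 0 => [::]
  | k'.+1 => let a := runAlg A O k' in rcons a (ask O a (alg_step A a))
  end.

Definition legalAlg (R : realFieldType) (n : nat) (S : 'I_n -> finType)
  (A : oracleAlg R S) (k : nat) : Prop :=
  (forall a : seq (dist R S), (size a < k)%N ->
     let q := alg_step A a in
     (forall p, -1 <= q_c q p <= 1) /\ q_Lp q \subset q_Ls q /\
     (forall p, p \in q_Lp q -> (q_xs q p < size a)%N)) /\
  (forall a : seq (dist R S), size a = k -> forall pi, (alg_out A a pi < k)%N).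

Definition algOutput (R : realFieldType) (n : nat) (S : 'I_n -> finType)
  (A : oracleAlg R S) (O : oracle R S) (k : nat) : family R S :=
  let a := runAlg A O k in fun pi => nth (@dist0 R n S) a (alg_out A a pi).

From HB Require Import structures.
From mathcomp Require Import all_boot all_order all_algebra.
From mathcomp Require Import ring lra.
Import Order.TTheory GRing.Theory Num.Theory.
Local Open Scope ring_scope.
Set Implicit Arguments. Unset Strict Implicit. Unset Printing Implicit Defensive.

(* The first query (zero objective, no leaders, no stability constraint)
   returns a correlated equilibrium m of the whole game; this query is
   feasible because correlated equilibria always exist (Hart-Schmeidler).
   The remaining |L| queries (all identical) maximise the leaders' total
   payoff over the followers' correlated equilibria subject to
   u_p(x) >= u_p(m) for every leader p; the last answer z is used at the
   root and m everywhere else.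
   This family is perfectly stable (every deviation of a leader leads to m,
   which no leader prefers to z), and a Pareto improvement at the root would
   be feasible for the last query with a larger objective. *)

(* One step of Fourier-Motzkin elimination of a column a of a system of
   inequalities with rows indexed by I: the new rows are the old rows where
   a is nonpositive, and for each pair (p, q) with a p > 0 > a q the
   combination of rows p and q in which the a-column cancels. *)
Section FourierMotzkin.
Variables (R : realFieldType) (I : finType) (a : I -> R).

Definition fm_row (f : I -> R) (r : I + I * I) : R :=
  match r with
  | inl i => if a i <= 0 then f i else 0
  | inr (p, q) => if (0 < a p) && (a q < 0) then a p * f q - a q * f p else 0
  end.

(* the nonnegative combination of the old rows equal to the combination y of
   the new rows *)
Definition fm_pullback (y : I + I * I -> R) (i : I) : R :=
  (if a i <= 0 then y (inl i) else 0)
  + \sum_p (if (0 < a p) && (a i < 0) then a p * y (inr (p, i)) else 0)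
  + \sum_q (if (0 < a i) && (a q < 0) then - a q * y (inr (i, q)) else 0).

Lemma fm_row_sum (J : Type) (js : seq J) (M : I -> J -> R) (w : J -> R) r :
  fm_row (fun i => \sum_(j <- js) M i j * w j) r =
  \sum_(j <- js) fm_row (M^~ j) r * w j.
Proof.
case: r => [i|[p q]] /=; case: ifP => _ //;
  try by rewrite big1 // => j _; rewrite mul0r.
rewrite !big_distrr -sumrB; apply: eq_bigr => j _ /=.
by rewrite mulrBl !mulrA.
Qed.

Lemma fm_row_elim r : fm_row a r <= 0.
Proof. by case: r => [i|[p q]] /=; case: ifP => // _; rewrite mulrC subrr. Qed.

Lemma fm_pullback_ge0 y : (forall r, 0 <= y r) -> forall i, 0 <= fm_pullback y i.
Proof.
move=> y0 i; rewrite /fm_pullback; apply: addr_ge0; first apply: addr_ge0.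
- by case: ifP.
- apply: sumr_ge0 => p _; case: ifP => // /andP[ap _].
  by apply: mulr_ge0 => //; exact: ltW.
- apply: sumr_ge0 => q _; case: ifP => // /andP[_ aq].
  by apply: mulr_ge0 => //; rewrite oppr_ge0 ltW.
Qed.

Lemma fm_pullback_sum y f :
  \sum_i fm_pullback y i * f i = \sum_r y r * fm_row f r.
Proof.
have -> : \sum_r y r * fm_row f r = \sum_i y (inl i) * fm_row f (inl i)
    + \sum_p \sum_q y (inr (p, q)) * fm_row f (inr (p, q)).
  by rewrite big_sumType pair_bigA; congr (_ + _); apply: eq_bigr => -[p q].
under eq_bigr do rewrite /fm_pullback !mulrDl.
rewrite !big_split /= -addrA; congr (_ + _).
  by apply: eq_bigr => i _; case: ifP => _; rewrite ?mul0r ?mulr0.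
have Ep : \sum_i (\sum_p (if (0 < a p) && (a i < 0) then a p * y (inr (p, i)) else 0)) * f i
   = \sum_p \sum_q (if (0 < a p) && (a q < 0) then a p * y (inr (p, q)) * f q else 0).
  rewrite exchange_big /=; apply: eq_bigr => p _; rewrite big_distrl /=.
  by apply: eq_bigr => q _; case: ifP => _; rewrite ?mul0r.
have Eq : \sum_i (\sum_q (if (0 < a i) && (a q < 0) then - a q * y (inr (i, q)) else 0)) * f i
   = \sum_p \sum_q (if (0 < a p) && (a q < 0) then - a q * y (inr (p, q)) * f p else 0).
  apply: eq_bigr => p _; rewrite big_distrl /=.
  by apply: eq_bigr => q _; case: ifP => _; rewrite ?mul0r.
rewrite Ep Eq -big_split /=; apply: eq_bigr => p _; rewrite -big_split /=.
by apply: eq_bigr => q _ /=; case: ifP => _ /=; [ring | rewrite addr0 mulr0].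
Qed.

Lemma fm_lift (b : I -> R) : (forall r, 0 <= fm_row b r) ->
  exists2 t, 0 <= t & forall i, 0 <= b i + a i * t.
Proof.
move=> Hb.
have b_nonpos i : a i <= 0 -> 0 <= b i by move=> ai; have := Hb (inl i); rewrite /= ai.
have b_pair p q : 0 < a p -> a q < 0 -> 0 <= a p * b q - a q * b p.
  by move=> ap aq; have := Hb (inr (p, q)); rewrite /= ap aq.
pose t := \big[Order.max/0]_(i | 0 < a i) (- b i / a i).
exists t => [|i]; first exact: bigmax_ge_id.
have [ai|ai|ai] := ltgtP (a i) 0; last by rewrite ai mul0r addr0 b_nonpos // ai.
- have na : 0 < - a i by rewrite oppr_gt0.
  have tc : t <= b i / - a i.
    apply: bigmax_le => [|p ap].
      by apply: divr_ge0; [exact: b_nonpos (ltW ai) | exact: ltW].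
    rewrite ler_pdivrMr // mulrAC ler_pdivlMr //; have := b_pair p i ap ai; lra.
  have ai_bound : a i * (b i / - a i) = - b i by field; rewrite lt_eqF.
  have : a i * (b i / - a i) <= a i * t by rewrite ler_nM2l.
  lra.
- have tb : - b i / a i <= t by exact: (@le_bigmax_cond _ _ _ _ i (fun i => 0 < a i)).
  have ai_bound : a i * (- b i / a i) = - b i by field; rewrite gt_eqF.
  have : a i * (- b i / a i) <= a i * t by rewrite ler_pM2l.
  lra.
Qed.

End FourierMotzkin.

Section Transposition.
Variable R : realFieldType.

(* If a nonnegative row combination y is negative on the columns js and
   nonpositive on j0, and row n0 is negative on j0, then adding row n0 to a
   large enough multiple of y makes every column in j0 :: js negative. *)
Lemma strict_boost (I : finType) (J : eqType) (M : I -> J -> R) (js : seq J)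
    (j0 : J) (n0 : I) (y : I -> R) :
  M n0 j0 < 0 -> (forall i, 0 <= y i) -> \sum_i y i * M i j0 <= 0 ->
  (forall j, j \in js -> \sum_i y i * M i j < 0) ->
  exists2 y' : I -> R, (forall i, 0 <= y' i) &
    forall j, j \in j0 :: js -> \sum_i y' i * M i j < 0.
Proof.
move=> Mn0 y0 dj0 djs; pose d j := \sum_i y i * M i j.
pose c := 1 + \sum_(j <- js) `|M n0 j| / (- d j).
have term_ge0 j : j \in js -> 0 <= `|M n0 j| / (- d j).
  by move=> jin; apply: divr_ge0 => //; rewrite oppr_ge0 ltW //; exact: djs.
have c_ge1 : 1 <= c by rewrite lerDl big_seq; apply: sumr_ge0 => j; exact: term_ge0.
have c_ge0 : 0 <= c by apply: le_trans c_ge1; exact: ler01.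
exists (fun i => c * y i + (i == n0)%:R) => [i|j].
  by apply: addr_ge0; [apply: mulr_ge0 | exact: ler0n].
have -> : \sum_i (c * y i + (i == n0)%:R) * M i j = c * d j + M n0 j.
  under eq_bigr do rewrite mulrDl -mulrA.
  rewrite big_split /= -big_distrr /=; congr (_ + _).
  rewrite (bigD1 n0) //= eqxx mul1r big1 ?addr0 //.
  by move=> i /negbTE ->; rewrite mul0r.
rewrite inE => /orP[/eqP -> | jin].
  have : c * d j0 <= 0 by apply: mulr_ge0_le0.
  lra.
have dj : d j < 0 := djs j jin.
have c_big : 1 + `|M n0 j| / (- d j) <= c.
  rewrite /c lerD2l (big_rem j jin) /= lerDl big_seq.
  by apply: sumr_ge0 => k kin; apply: term_ge0; exact: mem_rem kin.
have H1 : c * d j <= (1 + `|M n0 j| / (- d j)) * d j by apply: ler_wnM2r => //; exact: ltW.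
have H2 : (1 + `|M n0 j| / (- d j)) * d j = d j - `|M n0 j| by field; rewrite lt_eqF.
have := ler_norm (M n0 j); lra.
Qed.

(* A theorem of the alternative (a variant of Ville's theorem): for a finite
   real matrix M with columns indexed by js, either some nonnegative nonzero
   combination v of the columns has nonnegative entries, or some nonnegative
   combination y of the rows is negative on every column. The proof eliminates
   one column at a time (Fourier-Motzkin). *)
Lemma transposition (J : eqType) (js : seq J) : uniq js ->
  forall (I : finType) (M : I -> J -> R),
  (exists v : J -> R, [/\ forall j, 0 <= v j, exists2 j, j \in js & 0 < v j &
      forall i, 0 <= \sum_(j <- js) M i j * v j])
  \/ (exists2 y : I -> R, forall i, 0 <= y i &
      forall j, j \in js -> \sum_i y i * M i j < 0).
Proof.
elim: js => [_ I M|j0 js IH /= /andP[j0js ujs] I M].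
  by right; exists (fun _ => 0) => // j; rewrite in_nil.
have ne_j0 j : j \in js -> (j == j0) = false.
  by move=> jin; apply/negbTE; apply: contraNneq j0js => <-.
pose a i := M i j0.
have [a_ge0|] := boolP [forall i, 0 <= a i].
  left; exists (fun j => (j == j0)%:R); split=> [j||i]; first exact: ler0n.
    by exists j0; rewrite ?mem_head ?eqxx ?ltr01.
  rewrite big_cons eqxx mulr1 big1_seq ?addr0; first by move/forallP: a_ge0 => /(_ i).
  by move=> j /andP[_ /ne_j0 ->]; rewrite mulr0.
rewrite negb_forall => /existsP[n0]; rewrite -ltNge => an0.
case: (IH ujs _ (fun r j => fm_row a (M^~ j) r)).
- move=> [w [w_ge0 [j1 j1in w_j1] w_rows]].
  pose b i := \sum_(j <- js) M i j * w j.
  have [t t_ge0 t_lift] : exists2 t, 0 <= t & forall i, 0 <= b i + a i * t.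
    by apply: fm_lift => r; rewrite /b fm_row_sum; exact: w_rows.
  left; exists (fun j => if j == j0 then t else w j); split=> [j||i].
  + by case: ifP.
  + by exists j1; rewrite ?inE ?j1in ?orbT // ne_j0.
  rewrite big_cons eqxx (eq_big_seq (fun j => M i j * w j)) => [|j /ne_j0 -> //].
  by rewrite addrC; exact: t_lift.
- move=> [y2 y2_ge0 y2_neg].
  right; apply: (strict_boost an0 (fm_pullback_ge0 a y2_ge0)) => [|j jin].
    rewrite fm_pullback_sum; apply: sumr_le0 => r _.
    by apply: mulr_ge0_le0 => //; exact: fm_row_elim.
  by rewrite fm_pullback_sum; exact: y2_neg.
Qed.

Lemma transposition_fin (I J : finType) (M : I -> J -> R) :
  (exists v : J -> R, [/\ forall j, 0 <= v j, exists j, 0 < v j &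
      forall i, 0 <= \sum_j M i j * v j])
  \/ (exists2 y : I -> R, forall i, 0 <= y i & forall j, \sum_i y i * M i j < 0).
Proof.
case: (transposition (index_enum_uniq J) M) => [[v [v0 [j _ vj] Mv]]|[y y0 yM]].
  by left; exists v; split=> //; exists j.
by right; exists y => // j; apply: yM; exact: mem_index_enum.
Qed.

End Transposition.

Lemma invariant_measure (R : realFieldType) (T : finType) (t0 : T) (W : T -> T -> R) :
  (forall a b, 0 <= W a b) ->
  exists pi : T -> R, [/\ forall a, 0 <= pi a, exists a, 0 < pi a &
    forall c, pi c * \sum_b W c b = \sum_a pi a * W a c].
Proof.
move=> W0; pose M c a := (a == c)%:R * \sum_b W a b - W a c.
have unit_sum (a : T) (X : R) : \sum_c (a == c)%:R * X = X.
  rewrite (bigD1 a) //= eqxx mul1r big1 ?addr0 // => c /negbTE.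
  by rewrite eq_sym => ->; rewrite mul0r.
case: (transposition_fin M) => [[v [v0 [a va] Mv]]|[y y0 yM]].
- exists v; split=> //; first by exists a.
  pose g c := \sum_a M c a * v a.
  have g_sum0 : \sum_c g c = 0.
    rewrite /g exchange_big /=; apply: big1 => a' _.
    by rewrite -big_distrl /= sumrB unit_sum subrr mul0r.
  have g0 := psumr_eq0P (fun c _ => Mv c) g_sum0.
  move=> c; have /eqP := g0 c isT.
  rewrite /g /M; under eq_bigr do rewrite mulrBl.
  rewrite sumrB (bigD1 c) //= eqxx mul1r [X in _ + X - _]big1 ?addr0; last first.
    by move=> a' /negbTE ->; rewrite !mul0r.
  by rewrite subr_eq0 => /eqP E; rewrite mulrC E; apply: eq_bigr => a' _; rewrite mulrC.
- have [a _ amax] := @arg_maxP _ R T t0 xpredT y isT.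
  exfalso; have := yM a; rewrite ltNge => /negP; apply.
  have -> : \sum_c y c * M c a = \sum_c W a c * (y a - y c).
    rewrite /M; under eq_bigr do rewrite mulrBr mulrCA.
    rewrite sumrB.
    have -> : \sum_i (a == i)%:R * (y i * \sum_b W a b) = y a * \sum_b W a b.
      rewrite -[RHS](unit_sum a); apply: eq_bigr => i _.
      by case: eqP => [->|_]; rewrite ?mul0r.
    by rewrite big_distrr -sumrB; apply: eq_bigr => c _ /=; ring.
  by apply: sumr_ge0 => c _; apply: mulr_ge0 => //; rewrite subr_ge0; exact: amax.
Qed.

Section CorrelatedEquilibriumExistence.
Variables (R : realFieldType) (n : nat) (S : 'I_n -> finType)
  (u : 'I_n -> prof S -> R).

Lemma dev_at (s : prof S) p (b : S p) : dev s b p = b.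
Proof. by rewrite ffunE dfwith_in. Qed.

Lemma dev_out (s : prof S) p (b : S p) q : p != q -> dev s b q = s q.
Proof. by move=> ne; rewrite ffunE dfwith_out. Qed.

Lemma dev_dev (s : prof S) p (b c : S p) : dev (dev s b) c = dev s c.
Proof.
apply/ffunP => q; rewrite !ffunE; case: (eqVneq p q) => [<-|ne].
  by rewrite !dfwith_in.
by rewrite !dfwith_out // dev_out.
Qed.

Lemma dev_id (s : prof S) p : dev s (s p) = s.
Proof.
apply/ffunP => q; rewrite !ffunE; case: (eqVneq p q) => [<-|ne].
  by rewrite !dfwith_in.
by rewrite !dfwith_out.
Qed.

(* Deviating to b is a bijection from the profiles where p plays a onto
   those where p plays b. *)
Lemma sum_dev_reindex p (a b : S p) (g : prof S -> R) :
  \sum_(s : prof S | s p == a) g (dev s b) = \sum_(t : prof S | t p == b) g t.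
Proof.
rewrite [RHS](reindex_onto (fun s : prof S => dev s b) (fun t => dev t a)); last first.
  by move=> t /eqP tb; rewrite dev_dev -tb dev_id.
apply: eq_bigl => s; rewrite dev_at eqxx /= dev_dev.
by apply/eqP/eqP => [<-|<-]; [exact: dev_id | exact: dev_at].
Qed.

(* The CE constraints form a matrix: one row per player p and pair (a, b)
   of his strategies, whose entry at profile s is p's gain from not
   deviating from a to b at s (zero unless s recommends a to p). *)
Definition devPair (p : 'I_n) : finType := (S p * S p)%type.

Definition ce_gain (r : {p : 'I_n & devPair p}) (s : prof S) : R :=
  (s (tag r) == (tagged r).1)%:R * (u (tag r) s - u (tag r) (dev s (tagged r).2)).

Lemma ce_gain_sum p (a b : S p) (x : dist R S) :
  \sum_s ce_gain (Tagged devPair (a, b)) s * x s =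
  \sum_(s : prof S | s p == a) x s * (u p s - u p (dev s b)).
Proof.
rewrite [RHS]big_mkcond /=; apply: eq_bigr => s _.
by rewrite /ce_gain /=; case: eqP => _; rewrite ?mul0r // mul1r mulrC.
Qed.

Section ProductDistribution.
Variable pi : forall p : 'I_n, S p -> R.

Definition prod_weight (s : prof S) : R := \prod_(p : 'I_n) pi (s p).
Definition others_weight (p : 'I_n) (s : prof S) : R := \prod_(q | q != p) pi (s q).
Definition cond_payoff (p : 'I_n) (c : S p) : R :=
  \sum_(t : prof S | t p == c) others_weight p t * u p t.

Lemma others_weight_dev p s (b : S p) : others_weight p (dev s b) = others_weight p s.
Proof. by apply: eq_bigr => q qp; rewrite dev_out // eq_sym. Qed.

Lemma ce_gain_product p (a b : S p) :
  \sum_s ce_gain (Tagged devPair (a, b)) s * prod_weight s =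
  pi a * (cond_payoff a - cond_payoff b).
Proof.
rewrite ce_gain_sum.
under eq_bigr => s /eqP sa do
  rewrite /prod_weight (bigD1 p) //= -/(others_weight p s) sa.
rewrite /cond_payoff -(sum_dev_reindex a b) -sumrB big_distrr /=.
by apply: eq_bigr => s _; rewrite others_weight_dev; ring.
Qed.

Lemma balanced_gain_zero p (W : S p -> S p -> R) :
  (forall c, pi c * \sum_b W c b = \sum_a pi a * W a c) ->
  \sum_(ab : devPair p) W ab.1 ab.2 *
    \sum_s ce_gain (Tagged devPair ab) s * prod_weight s = 0.
Proof.
move=> inv.
have -> : \sum_(ab : devPair p) W ab.1 ab.2 *
    \sum_s ce_gain (Tagged devPair ab) s * prod_weight s =
  \sum_a \sum_b W a b * (pi a * (cond_payoff a - cond_payoff b)).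
  by rewrite pair_bigA; apply: eq_bigr => -[a b] _ /=; rewrite ce_gain_product.
rewrite (eq_bigr (fun a => pi a * (\sum_b W a b) * cond_payoff a -
                          \sum_b pi a * W a b * cond_payoff b)); last first.
  move=> a _; rewrite [pi a * _]mulr_sumr [_ * cond_payoff a]mulr_suml -sumrB.
  by apply: eq_bigr => b _; ring.
rewrite sumrB exchange_big /=.
rewrite [X in _ - X](eq_bigr (fun b => pi b * (\sum_c W b c) * cond_payoff b)) ?subrr //.
by move=> b _; rewrite -big_distrl inv.
Qed.
End ProductDistribution.

Hypothesis S_nonempty : forall p : 'I_n, (0 < #|S p|)%N.

(* Every nonnegative combination y of the gain rows is orthogonal to some
   nonzero product weight: take, for each player, an invariant measure of
   the rate matrix given by y restricted to his rows. *)
Lemma gain_rows_orthogonal (y : {p : 'I_n & devPair p} -> R) :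
  (forall r, 0 <= y r) ->
  exists w : prof S -> R, [/\ forall s, 0 <= w s, exists s, 0 < w s &
    \sum_s w s * \sum_r y r * ce_gain r s = 0].
Proof.
move=> y0; pose W p (a b : S p) := y (Tagged devPair (a, b)).
have /fin_all_exists[pi pi_inv] : forall p, exists pi : S p -> R,
    [/\ forall a, 0 <= pi a, exists a, 0 < pi a &
     forall c, pi c * \sum_b W p c b = \sum_a pi a * W p a c].
  move=> p; have /card_gt0P[t0 _] := S_nonempty p.
  by apply: (invariant_measure t0) => a b; exact: y0.
have /fin_all_exists[c c_pos] : forall p, exists c : S p, 0 < pi p c.
  by move=> p; have [_ [c ?] _] := pi_inv p; exists c.
exists (prod_weight pi); split.
- by move=> s; apply: prodr_ge0 => p _; have [] := pi_inv p.
- by exists (finfun c); apply: prodr_gt0 => p _; rewrite ffunE; exact: c_pos.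
have -> : \sum_s prod_weight pi s * \sum_r y r * ce_gain r s =
    \sum_p \sum_(ab : devPair p) W p ab.1 ab.2 *
      \sum_s ce_gain (Tagged devPair ab) s * prod_weight pi s.
  rewrite (eq_bigr (fun s => \sum_r y r * (ce_gain r s * prod_weight pi s))); last first.
    by move=> s _; rewrite mulr_sumr; apply: eq_bigr => r _; ring.
  rewrite exchange_big /= (sig_big_dep xpredT (fun _ => xpredT) (fun p (ab : devPair p) =>
    W p ab.1 ab.2 * \sum_s ce_gain (Tagged devPair ab) s * prod_weight pi s)) /=.
  by apply: eq_bigr => -[p [a b]] _; rewrite mulr_sumr.
by apply: big1 => p _; apply: balanced_gain_zero; have [] := pi_inv p.
Qed.

(* By the theorem of the alternative, either some
   nonzero nonnegative weight satisfies all gain rows (normalise it), or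
   some nonnegative combination of the rows is negative at every profile,
   which the orthogonal product weight rules out. *)
Lemma ce_exists : exists x : dist R S, inCE u [set: 'I_n] x.
Proof.
case: (transposition_fin ce_gain) => [[v [v0 [s1 vs1] gain_v]]|[y y0 neg]].
- pose V := \sum_s v s.
  have V_gt0 : 0 < V.
    by rewrite /V (bigD1 s1) //=; apply: ltr_pwDl => //; exact: sumr_ge0.
  exists (fun s => v s / V); split; first split.
  + by move=> s; apply: divr_ge0 => //; exact: ltW.
  + by rewrite -mulr_suml divff // gt_eqF.
  move=> p _ a b _; have := gain_v (Tagged devPair (a, b)); rewrite ce_gain_sum.
  move=> gain_ab; rewrite (eq_bigr (fun s => V^-1 * (v s * (u p s - u p (dev s b))))).
    by rewrite -mulr_sumr; apply: mulr_ge0 => //; rewrite invr_ge0 ltW.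
  by move=> s _; rewrite mulrAC mulrC.
- have [w [w0 [s ws] orth]] := gain_rows_orthogonal y0.
  suff : \sum_t w t * \sum_r y r * ce_gain r t < 0 by rewrite orth ltxx.
  rewrite (bigD1 s) //=.
  have at_s : w s * \sum_r y r * ce_gain r s < 0 by rewrite pmulr_rlt0.
  have elsewhere : \sum_(t | t != s) w t * \sum_r y r * ce_gain r t <= 0.
    by apply: sumr_le0 => t _; apply: mulr_ge0_le0 => //; exact: ltW.
  lra.
Qed.

End CorrelatedEquilibriumExistence.

Section Runs.
Variables (R : realFieldType) (n : nat) (S : 'I_n -> finType).
Variables (A : oracleAlg R S) (O : oracle R S).

Lemma size_runAlg k : size (runAlg A O k) = k.
Proof. by elim: k => //= k IH; rewrite size_rcons IH. Qed.

Lemma nth_runAlg i k : (i < k)%N ->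
  nth (@dist0 R n S) (runAlg A O k) i = ask O (runAlg A O i) (alg_step A (runAlg A O i)).
Proof.
elim: k => // k IH; rewrite ltnS leq_eqVlt => /orP[/eqP ->|lt].
  by rewrite /= nth_rcons size_runAlg ltnn eqxx.
by rewrite /= nth_rcons size_runAlg lt IH.
Qed.

End Runs.

Lemma inCE_sub (R : realFieldType) (n : nat) (S : 'I_n -> finType)
  (u : 'I_n -> prof S -> R) (P Q : {set 'I_n}) (x : dist R S) :
  Q \subset P -> inCE u P x -> inCE u Q x.
Proof. by move=> sQP [dx ce]; split=> // p pQ; apply: ce; exact: (subsetP sQP). Qed.

Section SCEbyOracle.
Variables (R : realFieldType) (n : nat) (S : 'I_n -> finType).
Variables (u : 'I_n -> prof S -> R) (L : {set 'I_n}).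

Definition leader_optimal (m z : dist R S) : Prop :=
  [/\ inCE u (~: L) z, forall p, p \in L -> eu u p m <= eu u p z &
      forall y, inCE u (~: L) y -> (forall p, p \in L -> eu u p m <= eu u p y) ->
        \sum_(p in L) eu u p y <= \sum_(p in L) eu u p z].

(* The family that plays z at the root and the full CE m everywhere else is
   an SCE-PA: deviations of leaders from the root only lead to m, and a
   Pareto improvement on z at the root would contradict leader-optimality. *)
Lemma sce_pa_of_leader_optimal (X : seq 'I_n -> dist R S) (m z : dist R S) :
  inCE u [set: 'I_n] m -> leader_optimal m z ->
  X [::] = z -> (forall pi, pi != [::] -> X pi = m) -> SCE_PA u L X.
Proof.
move=> m_ce [z_ce z_stable z_opt] X0 Xm.
have X_rcons pi p : X (rcons pi p) = m by apply: Xm; case: pi.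
split.
  split=> [pi _|pi _ p pL _]; last first.
    by rewrite X_rcons; case: (eqVneq pi [::]) => [->|/Xm ->]; rewrite ?X0 ?lexx ?z_stable.
  case: (eqVneq pi [::]) => [->|/Xm ->]; last by apply: inCE_sub m_ce; exact: subsetT.
  by rewrite X0; apply: inCE_sub z_ce; apply/subsetP => p; rewrite !inE.
move=> [X' [[X'_in _] [X'_ge [p0 [p0L X'_gt]]]]]; rewrite X0 in X'_ge X'_gt.
have X'_ce : inCE u (~: L) (X' [::]).
  have root_ord : ordSub L [::] by split=> // p; rewrite in_nil.
  by apply: inCE_sub (X'_in [::] root_ord); apply/subsetP => p; rewrite !inE.
have := z_opt _ X'_ce (fun p pL => le_trans (z_stable p pL) (X'_ge p pL)).
rewrite (bigD1 p0) //= [X in _ <= X](bigD1 p0) //=.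
have : \sum_(p in L | p != p0) eu u p z <= \sum_(p in L | p != p0) eu u p (X' [::]).
  by apply: ler_sum => p /andP[pL _]; exact: X'_ge.
lra.
Qed.

Lemma leader_optimal_no_leaders (m : dist R S) :
  L = set0 -> inCE u [set: 'I_n] m -> leader_optimal m m.
Proof.
rewrite /leader_optimal => L0 m_ce; rewrite L0.
by split=> [|p|y _ _]; rewrite ?setC0 ?inE ?big_set0.
Qed.

End SCEbyOracle.

Lemma coef_bool_bound (R : realFieldType) (b : bool) : -1 <= (b%:R : R) <= 1.
Proof. by case: b; rewrite /= ?lexx ?lerN10 ?ler01 ?andbT // (le_trans (lerN10 _)). Qed.

Section StabilityOracle.
Variables (R : realFieldType) (n : nat) (S : 'I_n -> finType).
Variables (u : 'I_n -> prof S -> R) (O : oracle R S).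
Hypothesis O_stab : stabilityOracle u O.

Lemma oracleObj_indicator (L : {set 'I_n}) (y : dist R S) :
  oracleObj u (fun p => (p \in L)%:R) y = \sum_(p in L) eu u p y.
Proof.
rewrite /oracleObj [RHS]big_mkcond /=; apply: eq_bigr => p _.
case: (p \in L); last by apply: big1 => s _; rewrite !mul0r.
by apply: eq_bigr => s _; rewrite mul1r mulrC.
Qed.

Lemma oracle_ce (xs : 'I_n -> dist R S) : (forall p, 0 < #|S p|)%N ->
  inCE u [set: 'I_n] (O (fun _ => 0) set0 set0 xs).
Proof.
move=> S_ne; have [e e_ce] := ce_exists u S_ne.
have no_xs p : p \in set0 -> isDist (xs p) by rewrite inE.
have feasible : exists x, oracleFeasible u set0 set0 xs x.
  by exists e; split=> [|p]; [exact: inCE_sub (subsetT _) e_ce | rewrite inE].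
have [[ce _] _] := O_stab (fun=> coef_bool_bound R false) (sub0set _) no_xs feasible.
by rewrite -setC0.
Qed.

(* Maximising the leaders' welfare over the followers' CE subject to every
   leader doing at least as well as under the full CE m yields a
   leader-optimal improvement on m (m itself makes the query feasible). *)
Lemma oracle_leader_optimal (L : {set 'I_n}) (m : dist R S) :
  inCE u [set: 'I_n] m ->
  leader_optimal u L m (O (fun p => (p \in L)%:R) L L (fun _ => m)).
Proof.
move=> m_ce; have m_dist p : p \in L -> isDist m by case: m_ce.
have feasible : exists x, oracleFeasible u L L (fun _ => m) x.
  by exists m; split=> [|p _]; [exact: inCE_sub (subsetT _) m_ce | exact: lexx].
have [[z_ce z_ge] z_max] :=
  O_stab (fun p => coef_bool_bound R (p \in L)) (subxx L) m_dist feasible.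
by split=> // y y_ce y_ge; rewrite -!oracleObj_indicator; exact: z_max.
Qed.
End StabilityOracle.

Section Algorithm.
Variables (R : realFieldType) (n : nat) (S : 'I_n -> finType) (L : {set 'I_n}).

Definition ce_query : query R n := Query (fun _ => 0) set0 set0 (fun _ => 0%N).

Definition leader_query : query R n :=
  Query (fun p => (p \in L)%:R) L L (fun _ => 0%N).

Definition sce_alg : oracleAlg R S :=
  OracleAlg (fun a => if a is [::] then ce_query else leader_query)
            (fun _ pi => if pi is [::] then #|L| else 0%N).

Lemma sce_alg_legal : legalAlg sce_alg #|L|.+1.
Proof.
split=> [[|x a] _ /=|a _ pi /=]; last by case: pi.
  split=> [p|]; first exact: (coef_bool_bound R false).
  by rewrite sub0set; split=> // p; rewrite inE.
by split=> [p|]; [exact: coef_bool_bound | split].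
Qed.

Lemma sce_alg_first_answer (O : oracle R S) k : (0 < k)%N ->
  nth (@dist0 R n S) (runAlg sce_alg O k) 0 = O (fun _ => 0) set0 set0 (fun _ => @dist0 R n S).
Proof. by move=> k_gt0; rewrite nth_runAlg. Qed.

Lemma sce_alg_later_answer (O : oracle R S) k i : (0 < i < k)%N ->
  nth (@dist0 R n S) (runAlg sce_alg O k) i =
  O (fun p => (p \in L)%:R) L L (fun _ => nth (@dist0 R n S) (runAlg sce_alg O k) 0).
Proof.
case/andP=> i_gt0 i_lt_k; rewrite nth_runAlg //.
have same_first : nth (@dist0 R n S) (runAlg sce_alg O i) 0 =
                  nth (@dist0 R n S) (runAlg sce_alg O k) 0.
  by rewrite !nth_runAlg // (ltn_trans i_gt0).
have := size_runAlg sce_alg O i.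
case: (runAlg sce_alg O i) same_first => [_ /= i0|x a' /= -> _].
  by move: i_gt0; rewrite -i0.
by rewrite /ask.
Qed.
End Algorithm.

Theorem theorem4 (R : realFieldType) (n : nat) (S : 'I_n -> finType)
  (u : 'I_n -> prof S -> R) (L : {set 'I_n})
  (HS : forall p : 'I_n, (0 < #|S p|)%N) :
  exists A : oracleAlg R S,
    legalAlg A #|L|.+1 /\
    forall O : oracle R S, stabilityOracle u O ->
      SCE_PA u L (algOutput A O #|L|.+1).
Proof.
exists (sce_alg R S L); split; first exact: sce_alg_legal.
move=> O O_stab; set answers := runAlg (sce_alg R S L) O #|L|.+1.
pose m := nth (@dist0 R n S) answers 0.
pose z := nth (@dist0 R n S) answers #|L|.
have m_ce : inCE u [set: 'I_n] m.
  by rewrite /m sce_alg_first_answer //; exact: (oracle_ce O_stab).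
have z_opt : leader_optimal u L m z.
  have [L_empty|L_gt0] := posnP #|L|.
    by rewrite /z L_empty; apply: leader_optimal_no_leaders m_ce; exact/cards0_eq.
  rewrite /z sce_alg_later_answer; last by rewrite L_gt0 ltnSn.
  exact: (oracle_leader_optimal O_stab L m_ce).
by apply: (sce_pa_of_leader_optimal m_ce z_opt) => // -[|p pi].
Qed.
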